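(* Let $r\in\mathbb{N}$ (so $n=r$), $\alpha>0$, $x_j=(j-1)/n$ and $c_j=x_j^\alpha$ for $j=1,\dots,n+1$. For $\lambda\ge 0$ let $m_j(\lambda)=e^{-\lambda c_j}/z(\lambda)$ with $z(\lambda)=\sum_{k=1}^{n+1}e^{-\lambda c_k}$, and $p_X^{\lambda}=\sum_{j=1}^{n+1}m_j(\lambda)\delta_{x_j}$. Then: (i) for every $\lambda\ge 0$, $i(x_j;p_X^{\lambda})=I(p_X^{\lambda})+\lambda\,\bigl(c_j-\mathbb{E}_{p_X^\lambda}[c(X)]\bigr)$ for all $j=1,\dots,n+1$; (ii) the function $\lambda\mapsto \mathbb{E}_{p_X^{\lambda}}[c(X)]=\sum_j m_j(\lambda)c_j$ satisfies $\frac{d}{d\lambda}\mathbb{E}_{p_X^{\lambda}}[c(X)]=-\mathrm{Var}_{p_X^{\lambda}}(c(X))<0$ on $[0,\infty)$, equals $\bar c^\ast$ at $\lambda=0$ and tends to $0$ as $\lambda\to\infty$. Consequently, for every $\bar c\in(0,\bar c^{\ast}]$ there is a unique $\lambda^{\ast}\ge 0$ with $\mathbb{E}_{p_X^{\lambda^\ast}}[c(X)]=\bar c$, and $p_X^{\lambda^\ast}$ satisfies $i(x;p_X^{\lambda^\ast})=I(p_X^{\lambda^\ast})+\lambda^\ast(c(x)-\bar c)$ for all $x$ in its support.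
   Context: Fix $b>0$ and set $r:=1/(2b)$, $n:=\lfloor r\rfloor$. Consider the additive uniform noise channel $Y=X+N$ with $N\sim\mathrm{Uniform}(-b,b)$ independent of $X$, so the transition density is $p_N(y\mid x)=r\,\mathbf{1}_{x-b<y<x+b}$. Admissible inputs are probability distributions $p_X$ on $[0,1]$. For such $p_X$ the output density is $p_Y(y;p_X)=\int p_N(y\mid x)\,dp_X(x)$, the marginal information density is $i(x;p_X)=\int p_N(y\mid x)\log\frac{p_N(y\mid x)}{p_Y(y;p_X)}\,dy\in[0,\infty]$, and $I(p_X)=\int i(x;p_X)\,dp_X(x)$ is the mutual information. The cost function is $c(x)=x^{\alpha}$. For $r\in\mathbb{N}$ the critical cost is $\bar c^\ast:=\frac{1}{n+1}\sum_{j=1}^{n+1}x_j^\alpha$ with $x_j=(j-1)/n$ (the expected cost under the capacity-achieving input without cost constraint, which is uniform on $\{x_1,\dots,x_{n+1}\}$). *)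

From HB Require Import structures.
From mathcomp Require Import all_boot all_order all_algebra.
From mathcomp Require Import all_classical all_reals all_analysis.
Set Implicit Arguments. Unset Strict Implicit. Unset Printing Implicit Defensive.
Import Order.TTheory GRing.Theory Num.Theory.
Import numFieldNormedType.Exports.
Local Open Scope ring_scope.

(* Transition density of the additive uniform noise channel Y = X + N,
   N ~ Uniform(-b,b):  p_N(y|x) = r 1_{x-b<y<x+b},  r = 1/(2b). *)
Definition pN {R : realType} (b : R) (y x : R) : R :=
  if (x - b < y) && (y < x + b) then (2 * b)^-1 else 0.

(* A (finitely supported) input distribution is given by k atoms xs i with
   weights w i :  p_X = \sum_i w i \delta_{xs i}. *)
Definition pY {R : realType} (b : R) (k : nat) (xs w : 'I_k -> R) (y : R) : R :=
  \sum_(i < k) w i * pN b y (xs i).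

Definition info_dens {R : realType} (b : R) (k : nat) (xs w : 'I_k -> R)
    (x : R) : \bar R :=
  (\int[@lebesgue_measure R]_y
     (if pN b y x == 0%R then 0%E
      else if pY b xs w y == 0%R then +oo%E
      else (pN b y x * ln (pN b y x / pY b xs w y))%:E))%E.

Definition mut_info {R : realType} (b : R) (k : nat) (xs w : 'I_k -> R) : \bar R :=
  (\sum_(i < k) (w i)%:E * info_dens b xs w (xs i))%E.

Definition cost {R : realType} (alpha x : R) : R := x `^ alpha.

(* grid points x_j = (j-1)/n, j = 1..n+1, indexed here by j : 'I_n.+1
   as x_j = j/n, j = 0..n *)
Definition xgrid {R : realType} (n : nat) (j : 'I_n.+1) : R := j%:R / n%:R.

Arguments xgrid {R} n j.

Definition zpart {R : realType} (n : nat) (alpha lam : R) : R :=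
  \sum_(k < n.+1) expR (- lam * cost alpha (xgrid n k)).

Definition gibbs {R : realType} (n : nat) (alpha lam : R) (j : 'I_n.+1) : R :=
  expR (- lam * cost alpha (xgrid n j)) / zpart n alpha lam.

Arguments gibbs {R} n alpha lam j.

Definition ecost {R : realType} (n : nat) (alpha lam : R) : R :=
  \sum_(j < n.+1) gibbs n alpha lam j * cost alpha (xgrid n j).

Definition vcost {R : realType} (n : nat) (alpha lam : R) : R :=
  \sum_(j < n.+1) gibbs n alpha lam j *
     (cost alpha (xgrid n j) - ecost n alpha lam) ^+ 2.

Definition cbarstar {R : realType} (n : nat) (alpha : R) : R :=
  (n.+1%:R)^-1 * \sum_(j < n.+1) cost alpha (xgrid n j).

(* Since r = n is an integer, the spacing 1/n of the grid equals the width 2b of the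
   noise window, so the output windows of distinct atoms are disjoint.  On the window
   of x_j the output density is m_j r, hence i(x_j; p_X) = -ln m_j for every input on
   the grid and I(p_X) is the entropy of m.  For Gibbs weights -ln m_j = lam c_j + ln z,
   and averaging gives I = lam E[c] + ln z, which is (i).  The derivative of a Gibbs
   average of c is minus the variance of c, which is positive because c_0 = 0 and
   c_n = 1; the bound E[c] <= (n+1)/lam gives the limit, and the intermediate value
   theorem together with strict monotonicity gives the unique lam*. *)

From HB Require Import structures.
From mathcomp Require Import all_boot all_order all_algebra.
From mathcomp Require Import all_classical all_reals all_analysis.
From mathcomp Require Import lra ring.
Set Implicit Arguments.
Unset Strict Implicit.
Unset Printing Implicit Defensive.

Import Order.TTheory GRing.Theory Num.Theory.
Import numFieldNormedType.Exports.
Local Open Scope ring_scope.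
Local Open Scope classical_set_scope.

Section SeparatedInputs.
Variables (R : realType) (b : R) (k : nat) (xs w : 'I_k -> R).
Hypotheses (hb : 0 < b) (xs_sep : forall i j, i != j -> 2 * b <= `|xs i - xs j|).

Lemma sep_window_uniq {i j : 'I_k} {y : R} :
  xs i - b < y < xs i + b -> xs j - b < y < xs j + b -> i = j.
Proof.
move=> /andP[yi1 yi2] /andP[yj1 yj2]; case: (eqVneq i j) => // ij.
have := xs_sep ij; rewrite leNgt => /negP[]; rewrite ltr_norml.
by apply/andP; split; lra.
Qed.

Lemma pY_sep {j : 'I_k} {y : R} :
  xs j - b < y < xs j + b -> pY b xs w y = w j / (2 * b).
Proof.
move=> yj; rewrite /pY (bigD1 j) //= big1 ?addr0; first by rewrite /pN yj.
move=> i ij; rewrite /pN; case: ifPn => [yi|_]; last by rewrite mulr0.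
by move: ij; rewrite (sep_window_uniq yi yj) eqxx.
Qed.

Lemma info_dens_sep (j : 'I_k) : 0 < w j ->
  info_dens b xs w (xs j) = (- ln (w j))%:E.
Proof.
move=> wj; set W := `]xs j - b, xs j + b[%R.
have b2 : 0 < 2 * b by rewrite mulr_gt0.
transitivity (\int[lebesgue_measure]_(y in [set` W]) ((2 * b)^-1 * - ln (w j))%:E)%E.
  rewrite [RHS]integral_mkcond; apply: eq_integral => y _; rewrite /patch /=.
  rewrite mem_setE /= in_itv /= /pN.
  case: (boolP (xs j - b < y < xs j + b)) => yW; last by rewrite eqxx.
  rewrite (pY_sep yW) invr_eq0 (gt_eqF b2) mulf_eq0 (gt_eqF wj) invr_eq0.
  by rewrite (gt_eqF b2) /= invf_div mulKf ?gt_eqF // lnV ?posrE.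
rewrite integral_cst /=; last exact: measurable_itv.
rewrite lebesgue_measure_itv /= lte_fin ltrD2l gt0_cp // -EFinD -EFinM.
have -> : xs j + b - (xs j - b) = 2 * b by lra.
by rewrite mulrAC mulVf ?mul1r ?gt_eqF.
Qed.

Lemma mut_info_sep : (forall i, 0 < w i) ->
  mut_info b xs w = (- \sum_i w i * ln (w i))%:E.
Proof.
move=> w_gt0; rewrite /mut_info -sumrN -sumEFin; apply: eq_bigr => i _.
by rewrite info_dens_sep // -EFinM mulrN.
Qed.

End SeparatedInputs.

Lemma dist_natr_ge1 (R : numDomainType) (m k : nat) :
  m != k -> 1 <= `|m%:R - k%:R : R|.
Proof.
have dist_lt (p q : nat) : (p < q)%N -> 1 <= `|q%:R - p%:R : R|.
  by move=> lt_pq; rewrite -natrB ?(ltnW lt_pq) // ger0_norm ?ler0n // ler1n subn_gt0.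
by rewrite neq_ltn => /orP[/dist_lt|/dist_lt]; rewrite // distrC.
Qed.

Lemma grid_size_gt0 {R : realType} {b : R} {n : nat} :
  0 < b -> (2 * b)^-1 = n%:R -> (0 < n)%N.
Proof. by move=> hb hr; rewrite -(ltr0n R) -hr invr_gt0 mulr_gt0. Qed.

Lemma xgrid_sep (R : realType) (b : R) (n : nat) :
  0 < b -> (2 * b)^-1 = n%:R ->
  forall i j : 'I_n.+1, i != j -> 2 * b <= `|xgrid n i - xgrid n j|.
Proof.
move=> hb hr i j ij.
rewrite -[2 * b]invrK hr /xgrid -mulrBl normrM normfV normr_nat.
by apply: ler_peMl; rewrite ?invr_ge0 ?ler0n ?dist_natr_ge1.
Qed.


Lemma is_derive_expR_mulN {R : realType} (c x : R) :
  is_derive x 1 (fun l => expR (- l * c)) (- c * expR (- x * c)).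
Proof.
have -> : (fun l => expR (- l * c)) = expR \o ((- c) \*: @id R).
  by apply/funext => l /=; rewrite mulNr mulrC -mulNr.
apply: is_derive_eq
  (is_derive1_comp (is_derive_expR _) (is_deriveZ (- c) (is_derive_id x 1))) _.
rewrite /= /GRing.scale /= mulr1 mulrC; congr (_ * expR _).
by rewrite !mulNr mulrC.
Qed.

Section GibbsFamily.
Variables (R : realType) (n : nat) (alpha : R).
Local Notation c j := (cost alpha (xgrid n j)).
Local Notation z := (zpart n alpha).
Local Notation m lam := (gibbs n alpha lam).
Local Notation E := (ecost n alpha).
Local Notation V := (vcost n alpha).

Lemma zpart_gt0 (lam : R) : 0 < z lam.
Proof. by rewrite /zpart (bigD1 ord0) //= ltr_pwDl ?expR_gt0 // sumr_ge0. Qed.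

Lemma gibbs_gt0 (lam : R) j : 0 < m lam j.
Proof. by rewrite /gibbs divr_gt0 ?expR_gt0 ?zpart_gt0. Qed.

Lemma gibbs_sum1 (lam : R) : \sum_j m lam j = 1.
Proof. by rewrite /gibbs -mulr_suml mulfV // gt_eqF // zpart_gt0. Qed.

Lemma ln_gibbs (lam : R) j : ln (m lam j) = - lam * c j - ln (z lam).
Proof. by rewrite /gibbs ln_div ?posrE ?expR_gt0 ?zpart_gt0 // expRK. Qed.

Lemma gibbs_entropy (lam : R) :
  - \sum_j m lam j * ln (m lam j) = lam * E lam + ln (z lam).
Proof.
rewrite -sumrN /ecost mulr_sumr -[ln _]mul1r -(gibbs_sum1 lam) mulr_suml -big_split.
by apply: eq_bigr => j _; rewrite ln_gibbs /=; ring.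
Qed.

Lemma is_derive_zpart (lam : R) :
  is_derive lam 1 z (- \sum_k c k * expR (- lam * c k)).
Proof.
rewrite -sumrN; have -> : z = \sum_k (fun l => expR (- l * c k)) by rewrite fct_sumE.
apply: is_derive_sum => k; rewrite -mulNr.
exact: is_derive_expR_mulN.
Qed.

Lemma ecostE (lam : R) : E lam = (\sum_k c k * expR (- lam * c k)) / z lam.
Proof.
by rewrite /ecost mulr_suml; apply: eq_bigr => k _; rewrite /gibbs mulrAC [_ * c k]mulrC.
Qed.

Lemma is_derive_gibbs (lam : R) j :
  is_derive lam 1 (fun l => m l j) (m lam j * (E lam - c j)).
Proof.
have -> : (fun l => m l j) = (fun l => expR (- l * c j)) * (fun l => (z l)^-1) by [].
have z_neq0 := lt0r_neq0 (zpart_gt0 lam).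
have dM := is_deriveM (is_derive_expR_mulN (c j) lam)
  (@is_deriveV R z lam _ 1 z_neq0 (is_derive_zpart lam)).
apply: is_derive_eq dM _.
by rewrite ecostE /gibbs /GRing.scale /=; field.
Qed.

Lemma is_derive_ecost (lam : R) : is_derive lam 1 E (- V lam).
Proof.
have -> : E = \sum_j (c j \*: (fun l => m l j)).
  by rewrite fct_sumE; apply/funext => l; apply: eq_bigr => j _; rewrite mulrC.
apply: is_derive_eq
  (is_derive_sum (fun j => is_deriveZ (c j) (is_derive_gibbs lam j))) _.
have centered : \sum_j m lam j * (E lam - c j) = 0.
  under eq_bigr => j _ do rewrite mulrBr.
  by rewrite sumrB -mulr_suml gibbs_sum1 mul1r /ecost subrr.
apply/eqP; rewrite -addr_eq0 /vcost -big_split /=; apply/eqP.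
rewrite (eq_bigr (fun j => E lam * (m lam j * (E lam - c j)))).
  by rewrite -mulr_sumr centered mulr0.
by move=> j _; rewrite /GRing.scale /=; ring.
Qed.

Lemma ecost0 : E 0 = cbarstar n alpha.
Proof.
rewrite /ecost /cbarstar mulr_sumr; apply: eq_bigr => j _; rewrite /gibbs /zpart.
under eq_bigr => k _ do rewrite oppr0 mul0r expR0.
by rewrite oppr0 mul0r expR0 sumr_const card_ord div1r.
Qed.

Lemma cost_ge0 j : 0 <= c j.
Proof. exact: powR_ge0. Qed.

Lemma ecost_ge0 (lam : R) : 0 <= E lam.
Proof. by rewrite sumr_ge0 // => j _; rewrite mulr_ge0 ?cost_ge0 ?ltW ?gibbs_gt0. Qed.

Hypotheses (n_gt0 : (0 < n)%N) (alpha_neq0 : alpha != 0).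

Lemma cost_xgrid0 : c ord0 = 0.
Proof. by rewrite /cost /xgrid mul0r powR0. Qed.

Lemma cost_xgrid_max : c ord_max = 1.
Proof. by rewrite /cost /xgrid /= divff ?powR1 // pnatr_eq0 -lt0n. Qed.

(* c_0 = 0 and c_n = 1, so the cost is not constant on the support. *)
Lemma vcost_gt0 (lam : R) : 0 < V lam.
Proof.
have terms_ge0 j : 0 <= m lam j * (c j - E lam) ^+ 2.
  by rewrite mulr_ge0 ?sqr_ge0 ?ltW ?gibbs_gt0.
rewrite lt_def sumr_ge0 ?andbT //.
apply/eqP => /(psumr_eq0P (fun j _ => terms_ge0 j)) V0.
have c_eqE j : c j = E lam.
  apply/eqP; move/eqP: (V0 j isT).
  by rewrite mulf_eq0 gt_eqF ?gibbs_gt0 //= sqrf_eq0 subr_eq0.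
by have := oner_neq0 R; rewrite -cost_xgrid_max c_eqE -(c_eqE ord0) cost_xgrid0 eqxx.
Qed.

Lemma zpart_ge1 (lam : R) : 1 <= z lam.
Proof.
by rewrite /zpart (bigD1 ord0) //= cost_xgrid0 mulr0 expR0 lerDl sumr_ge0.
Qed.

Lemma ecost_le {lam : R} : 0 < lam -> E lam <= n.+1%:R / lam.
Proof.
move=> lam_gt0.
have -> : n.+1%:R / lam = \sum_(j < n.+1) lam^-1 by rewrite sumr_const card_ord mulr_natl.
rewrite /ecost ler_sum // => j _.
have lamc_le : lam * c j <= expR (lam * c j) by have := expR_ge1Dx (lam * c j); lra.
apply: (@le_trans _ _ (expR (- lam * c j) * c j)).
  rewrite /gibbs mulrAC ler_pdivrMr ?zpart_gt0 // ler_peMr ?zpart_ge1 //.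
  by rewrite mulr_ge0 ?expR_ge0 ?cost_ge0.
by rewrite mulNr expRN ler_pdivrMl ?expR_gt0 // ler_pdivlMr // mulrC.
Qed.

Lemma ecost_cvg0 : E lam @[lam --> +oo] --> 0.
Proof.
apply/cvgr0Pnorm_lt => e e_gt0; exists (n.+1%:R / e); split; first exact: num_real.
move=> lam lam_gt; have lam_gt0 : 0 < lam by apply: lt_trans lam_gt; rewrite divr_gt0.
rewrite ger0_norm ?ecost_ge0 // (le_lt_trans (ecost_le lam_gt0)) //.
by rewrite ltr_pdivrMr // mulrC -ltr_pdivrMr.
Qed.

Lemma continuous_ecost : continuous E.
Proof.
move=> lam; apply/differentiable_continuous/derivable1_diffP.
by case: (is_derive_ecost lam).
Qed.

Lemma ecost_decr : {homo E : x y /~ x < y}.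
Proof.
move=> x y xy; rewrite -subr_lt0.
have [t _ ->] :=
  MVT xy (fun t _ => is_derive_ecost t) (continuous_subspaceT continuous_ecost).
by rewrite mulNr oppr_lt0 mulr_gt0 ?vcost_gt0 ?subr_gt0.
Qed.

Lemma ecost_inj : injective E.
Proof. exact/dec_inj/le_nmono/ecost_decr. Qed.

Lemma ecost_onto (cbar : R) : 0 < cbar <= cbarstar n alpha ->
  exists2 lam, 0 <= lam & E lam = cbar.
Proof.
move=> /andP[cbar_gt0 cbar_le].
set L := n.+1%:R / cbar + 1.
have L_gt0 : 0 < L by rewrite ltr_wpDl // divr_ge0 ?ler0n ?ltW.
have EL_lt : E L < cbar.
  apply: le_lt_trans (ecost_le L_gt0) _.
  by rewrite ltr_pdivrMr // mulrDr mulr1 mulrC divfK ?gt_eqF // ltrDl.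
have [|lam lamI Elam] :=
  @IVT R E 0 L cbar (ltW L_gt0) (continuous_subspaceT continuous_ecost).
  by rewrite ge_min le_max ecost0 cbar_le (ltW EL_lt) orbT.
by exists lam => //; move: lamI; rewrite in_itv => /andP[].
Qed.

End GibbsFamily.

Lemma info_dens_gibbs (R : realType) (b : R) (n : nat) (alpha lam : R) (j : 'I_n.+1) :
  0 < b -> (2 * b)^-1 = n%:R ->
  info_dens b (xgrid n) (gibbs n alpha lam) (xgrid n j) =
  (mut_info b (xgrid n) (gibbs n alpha lam)
   + (lam * (cost alpha (xgrid n j) - ecost n alpha lam))%:E)%E.
Proof.
move=> hb hr; have sep := xgrid_sep hb hr.
rewrite (info_dens_sep hb sep (gibbs_gt0 _ _ _)) (mut_info_sep hb sep (gibbs_gt0 _ _)).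
by rewrite gibbs_entropy ln_gibbs -EFinD; congr EFin; ring.
Qed.

Theorem mainTheorem4 (R : realType) (b : R) (n : nat) (alpha : R)
  (hb : 0 < b) (hr : (2 * b)^-1 = n%:R) (halpha : 0 < alpha) :
  (* (i) *)
  (forall lam : R, 0 <= lam -> forall j : 'I_n.+1,
     info_dens b (xgrid n) (gibbs n alpha lam) (xgrid n j) =
     (mut_info b (xgrid n) (gibbs n alpha lam)
      + (lam * (cost alpha (xgrid n j) - ecost n alpha lam))%:E)%E) /\
  (* (ii) *)
  (forall lam : R, 0 <= lam ->
     is_derive lam 1 (ecost n alpha) (- vcost n alpha lam) /\
     - vcost n alpha lam < 0) /\
  ecost n alpha 0 = cbarstar n alpha /\
  (ecost n alpha lam @[lam --> +oo] --> 0) /\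
  (* consequence *)
  (forall cbar : R, 0 < cbar <= cbarstar n alpha ->
     exists lamstar : R,
       (0 <= lamstar /\ ecost n alpha lamstar = cbar) /\
       (forall mu : R, 0 <= mu -> ecost n alpha mu = cbar -> mu = lamstar) /\
       (forall j : 'I_n.+1, 0 < gibbs n alpha lamstar j ->
          info_dens b (xgrid n) (gibbs n alpha lamstar) (xgrid n j) =
          (mut_info b (xgrid n) (gibbs n alpha lamstar)
           + (lamstar * (cost alpha (xgrid n j) - cbar))%:E)%E)).
Proof.
have n_gt0 := grid_size_gt0 hb hr.
have alpha_neq0 : alpha != 0 by rewrite gt_eqF.
split; first by move=> lam _ j; exact: info_dens_gibbs.
split.
  by move=> lam _; rewrite oppr_lt0 vcost_gt0 //; split=> //; exact: is_derive_ecost.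
split; first exact: ecost0.
split; first exact: ecost_cvg0.
move=> cbar /(ecost_onto alpha_neq0) [lam lam_ge0 Elam].
exists lam; split=> //; split.
  by move=> mu _; rewrite -Elam => /(ecost_inj n_gt0 alpha_neq0).
by move=> j _; rewrite -Elam; exact: info_dens_gibbs.
Qed.
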